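(* Let $\rho \geq 1$ and let $f : \mathbb{N} \to \mathbb{Q}_{\geq 1}$. If there is a polynomial-time $f(|U|)$-approximation algorithm for $(S^{-},\rho)$-SetCover, then there is a polynomial-time $f(|U|)$-approximation algorithm for (unweighted) SetCover.
   Context: SetCover: given a finite universe $U$ and a collection $\mathcal{S} \subseteq \mathcal{P}(U)$ with $\bigcup \mathcal{S} = U$, find a subcollection covering $U$ with as few sets as possible. Reoptimization problem $(\mathcal{M},\rho)$-$\mathcal{I}$: instances are triples $(I,S,I')$ where $(I,I')\in\mathcal{M}$ (an allowed modification), $S$ is a feasible solution of $I$ with value at most $\rho\,\mathrm{OPT}(I)$, and the goal is to compute a solution of $I'$; an $\alpha$-approximation outputs a solution of value at most $\alpha\,\mathrm{OPT}(I')$. Modification $S^{-}$ (removing a set): given $(U,\mathcal{S})$ and $s'\in\mathcal{S}$, the modified instance is $(U,\mathcal{S}\setminus\{s'\})$. Both the original and the modified instance must be feasible ($\bigcup\mathcal{S}=U$). *)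

From mathcomp Require Import all_boot all_order all_algebra.
Set Implicit Arguments. Unset Strict Implicit. Unset Printing Implicit Defensive.
Import Order.TTheory GRing.Theory Num.Theory.

(* An instance is a duplicate-free list L of subsets of 'I_n (the      *)
(* collection S), listed in some order; a solution is a set of indices *)
(* into L (a subcollection).                                           *)

Definition sc_valid n (L : seq {set 'I_n}) : bool :=
  uniq L && (\bigcup_(A <- L) A == [set: 'I_n]).

Definition sc_covers n (L : seq {set 'I_n}) (J : {set 'I_(size L)}) : bool :=
  \bigcup_(i in J) nth set0 L i == [set: 'I_n].
Arguments sc_covers {n} L J.

(* OPT(I): minimum number of sets in a cover (default size L when no
   cover exists, which never happens for valid instances). *)
Definition sc_opt n (L : seq {set 'I_n}) : nat :=
  \big[minn/size L]_(J : {set 'I_(size L)} | sc_covers L J) #|J|.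

Inductive Sym := Blank | Zero | One | Hash | Dollar.
Inductive Move := MLeft | MRight | MStay.

Record TM := {
  tm_k : nat;
  tm_start : 'I_tm_k.+1;
  (* None = halt *)
  tm_delta : 'I_tm_k.+1 -> Sym -> option ('I_tm_k.+1 * Sym * Move)
}.

(* configuration: state, left part of the tape (nearest cell first),
   right part of the tape starting with the scanned cell;
   cells beyond the lists are blank. *)
Definition config (M : TM) := ('I_(tm_k M).+1 * seq Sym * seq Sym)%type.

Definition tm_step (M : TM) (c : config M) : option (config M) :=
  let: (q, l, r) := c in
  match tm_delta q (head Blank r) with
  | None => None
  | Some (q', s, MStay) => Some (q', l, s :: behead r)
  | Some (q', s, MRight) => Some (q', s :: l, behead r)
  | Some (q', s, MLeft) => Some (q', behead l, head Blank l :: s :: behead r)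
  end.

Definition is_blank (s : Sym) : bool := if s is Blank then true else false.

Definition tm_output (M : TM) (c : config M) : seq Sym :=
  let: (_, _, r) := c in take (find is_blank r) r.

Fixpoint tm_run_cfg (M : TM) (t : nat) (c : config M) : option (seq Sym) :=
  match tm_step c with
  | None => Some (tm_output c)
  | Some c' => if t is t'.+1 then tm_run_cfg t' c' else None
  end.

Definition tm_run (M : TM) (t : nat) (w : seq Sym) : option (seq Sym) :=
  tm_run_cfg t (tm_start M, [::], w).

Definition enc_bit (b : bool) : Sym := if b then One else Zero.

Definition enc_set n (A : {set 'I_n}) : seq Sym :=
  [seq enc_bit (i \in A) | i <- enum 'I_n].

Definition enc_inst n (L : seq {set 'I_n}) : seq Sym :=
  nseq n One ++ Hash :: flatten [seq enc_set A ++ [:: Hash] | A <- L].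

Definition enc_sol m (J : {set 'I_m}) : seq Sym :=
  [seq enc_bit (i \in J) | i <- enum 'I_m].

Definition enc_reopt n (L : seq {set 'I_n}) (J : {set 'I_(size L)})
  (L' : seq {set 'I_n}) : seq Sym :=
  enc_inst L ++ Dollar :: enc_sol J ++ Dollar :: enc_inst L'.
Arguments enc_reopt {n} L J L'.

Definition sc_good_output (f : nat -> rat) n (L : seq {set 'I_n})
  (o : seq Sym) : Prop :=
  exists J : {set 'I_(size L)},
    [/\ sc_covers L J, o = enc_sol J & (#|J|%:R <= f n * (sc_opt L)%:R)%R].

Definition poly_approx_SetCover (f : nat -> rat) : Prop :=
  exists (M : TM) (c d : nat),
    forall n (L : seq {set 'I_n}), sc_valid L ->
      let w := enc_inst L in
      exists o, tm_run M (c * size w ^ d + c) w = Some o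
                /\ sc_good_output f L o.

Definition poly_approx_reopt_Sminus (R : realFieldType) (rho : R)
  (f : nat -> rat) : Prop :=
  exists (M : TM) (c d : nat),
    forall n (L L' : seq {set 'I_n}) (s' : {set 'I_n})
           (J : {set 'I_(size L)}),
      sc_valid L -> s' \in L -> perm_eq L' (rem s' L) -> sc_valid L' ->
      sc_covers L J -> (#|J|%:R <= rho * (sc_opt L)%:R)%R ->
      let w := enc_reopt L J L' in
      exists o, tm_run M (c * size w ^ d + c) w = Some o
                /\ sc_good_output f L' o.

(* If the universe is nonempty and the full set U is not among the sets of the
   SetCover instance L, then {U} is an optimal, hence rho-approximate, solution of
   L + [U], and removing U from L + [U] gives back L.  So a Turing machine can
   write the reoptimization instance (L + [U], {U}, L) and hand over to the
   reoptimization algorithm, whose answer is an f(|U|)-approximate cover of L.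
   Otherwise the empty solution (when U is empty) or {U} is optimal and written
   directly.  The rewriting takes a constant number of passes over the tape, each
   quadratic in the length of the input, so the composite machine stays
   polynomial. *)

From HB Require Import structures.
From mathcomp Require Import all_boot all_order all_algebra zify.
Import Order.TTheory GRing.Theory Num.Theory.
Set Implicit Arguments. Unset Strict Implicit. Unset Printing Implicit Defensive.

Definition sym_to_ord (s : Sym) : 'I_5 :=
  match s with
  | Blank => @Ordinal 5 0 isT | Zero => @Ordinal 5 1 isT | One => @Ordinal 5 2 isT
  | Hash => @Ordinal 5 3 isT | Dollar => @Ordinal 5 4 isT
  end.
Definition ord_to_sym (i : 'I_5) : Sym :=
  match val i with 0 => Blank | 1 => Zero | 2 => One | 3 => Hash | _ => Dollar end.
Lemma sym_to_ordK : cancel sym_to_ord ord_to_sym. Proof. by case. Qed.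
HB.instance Definition _ := Finite.copy Sym (can_type sym_to_ordK).

Section Machine.
Variable S : Type.
Definition cfg := (S * seq Sym * seq Sym)%type.
Definition trans := S -> Sym -> option (S * Sym * Move).
Variable d : trans.

Definition step (c : cfg) : option cfg :=
  let: (q, l, r) := c in
  match d q (head Blank r) with
  | None => None
  | Some (q', s, MStay) => Some (q', l, s :: behead r)
  | Some (q', s, MRight) => Some (q', s :: l, behead r)
  | Some (q', s, MLeft) => Some (q', behead l, head Blank l :: s :: behead r)
  end.

Definition output (c : cfg) : seq Sym :=
  let: (_, _, r) := c in take (find is_blank r) r.

Fixpoint run (t : nat) (c : cfg) : option (seq Sym) :=
  match step c with
  | None => Some (output c)
  | Some c' => if t is t'.+1 then run t' c' else None
  end.

Fixpoint steps (n : nat) (c : cfg) : option cfg :=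
  if n is n'.+1 then obind (steps n') (step c) else Some c.

Lemma steps1 c : steps 1 c = step c. Proof. by rewrite /=; case: (step c). Qed.

(* [c] reaches [c'] in exactly [N] steps, as far as the results of [run] can tell. *)
Definition leadsto (c : cfg) (N : nat) (c' : cfg) := forall t, run (N + t) c = run t c'.

Lemma runE t c : run t c = match step c with None => Some (output c)
  | Some c' => if t is t'.+1 then run t' c' else None end.
Proof. by case: t. Qed.

Lemma steps_add a b c c1 c2 :
  steps a c = Some c1 -> steps b c1 = Some c2 -> steps (a + b) c = Some c2.
Proof.
elim: a c => [|a IH] c /=; first by case=> ->.
by case: (step c) => // c' /IH; apply.
Qed.

Lemma leadsto_trans c1 c2 c3 a b :
  leadsto c1 a c2 -> leadsto c2 b c3 -> leadsto c1 (a + b) c3.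
Proof. by move=> h1 h2 t; rewrite -addnA h1 h2. Qed.

Lemma steps_leadsto n c c' : steps n c = Some c' -> leadsto c n c'.
Proof.
elim: n c => [|n IH] c /=; first by case=> -> t.
by case E: (step c) => [c1|] // /IH h t /=; rewrite E h.
Qed.

Lemma run_halt c t : step c = None -> run t c = Some (output c).
Proof. by case: t => [|t] /= ->. Qed.

Lemma run_monotone t t' c o : run t c = Some o -> run (t + t') c = Some o.
Proof.
elim: t c => [|t IH] c; last by rewrite addSn /=; case: (step c) => // c1; apply: IH.
by rewrite /=; case E: (step c) => [c1|] // [<-]; rewrite add0n run_halt.
Qed.

End Machine.

Arguments step {S}. Arguments run {S}. Arguments steps {S}. Arguments leadsto {S}.
Arguments output {S}.

Lemma tm_run_cfgE (M : TM) t c : tm_run_cfg t c = run (@tm_delta M) t c.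
Proof.
elim: t c => [|t IH] [[q l] r] /=; rewrite /tm_step /step /=;
  by case: (tm_delta q _) => [[[q' s] []]|].
Qed.

Lemma tm_run_monotone (M : TM) t t' w o :
  tm_run M t w = Some o -> tm_run M (t + t') w = Some o.
Proof. by rewrite /tm_run !tm_run_cfgE; apply: run_monotone. Qed.

(** * Simulations and composition of machines *)

Section Simulation.
Variables (S S' : Type) (d : trans S) (d' : trans S') (h : S -> S').

Definition map_action (p : S * Sym * Move) : S' * Sym * Move := (h p.1.1, p.1.2, p.2).
Definition map_cfg (c : cfg S) : cfg S' := (h c.1.1, c.1.2, c.2).

Definition sim := forall s a p, d s a = Some p -> d' (h s) a = Some (map_action p).
Definition sim_exact := forall s a, d' (h s) a = omap map_action (d s a).

Lemma sim_exactW : sim_exact -> sim.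
Proof. by move=> H s a p E; rewrite H E. Qed.

Lemma step_sim : sim -> forall c c', step d c = Some c' ->
  step d' (map_cfg c) = Some (map_cfg c').
Proof.
move=> H [[q l] r] c' /=.
case E: (d q _) => [[[q1 s] m]|] //; rewrite (H _ _ _ E) /=.
by case: m E => _ [<-].
Qed.

Lemma steps_sim : sim -> forall n c c', steps d n c = Some c' ->
  steps d' n (map_cfg c) = Some (map_cfg c').
Proof.
move=> H; elim=> [|n IH] c c'; first by case=> ->.
rewrite [steps d _ _]/=; case E: (step d c) => [c1|] // /IH run1.
change (obind (steps d' n) (step d' (map_cfg c)) = Some (map_cfg c')).
by rewrite (step_sim H E).
Qed.

Lemma step_sim_exact : sim_exact -> forall c, step d' (map_cfg c) = omap map_cfg (step d c).
Proof.
move=> H [[q l] r] /=; rewrite H.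
by case: (d q _) => [[[q1 s] m]|] //=; case: m.
Qed.

Lemma run_sim_exact : sim_exact -> forall t c, run d' t (map_cfg c) = run d t c.
Proof.
move=> H; elim=> [|t IH] c; rewrite runE [run d _ c]runE (step_sim_exact H);
  by case: (step d c) => [c1|] //=; case: c => [[]].
Qed.

End Simulation.

Lemma sim_comp (S1 S2 S3 : Type) (d1 : trans S1) (d2 : trans S2) (d3 : trans S3) h1 h2 :
  sim d1 d2 h1 -> sim d2 d3 h2 -> sim d1 d3 (h2 \o h1).
Proof. by move=> H1 H2 s a p /H1 /H2. Qed.

Lemma sim_exact_comp (S1 S2 S3 : Type) (d1 : trans S1) (d2 : trans S2) (d3 : trans S3) h1 h2 :
  sim_exact d1 d2 h1 -> sim_exact d2 d3 h2 -> sim_exact d1 d3 (h2 \o h1).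
Proof. by move=> H1 H2 s a /=; rewrite H2 H1; case: (d1 s a). Qed.

Section Composition.
Variables (S1 S2 : Type) (d1 : trans S1) (d2 : trans S2).

Definition seq_trans (k : S1 -> S2) : trans (S1 + S2) := fun q a =>
  match q with
  | inl s => if d1 s a is Some p then Some (map_action inl p)
             else omap (map_action inr) (d2 (k s) a)
  | inr s => omap (map_action inr) (d2 s a)
  end.

Definition sum_trans : trans (S1 + S2) := fun q a =>
  match q with
  | inl s => omap (map_action inl) (d1 s a)
  | inr s => omap (map_action inr) (d2 s a)
  end.

Lemma seq_trans_l k : sim d1 (seq_trans k) inl. Proof. by move=> s a p /= ->. Qed.
Lemma seq_trans_r k : sim_exact d2 (seq_trans k) inr. Proof. by []. Qed.
Lemma sum_trans_l : sim_exact d1 sum_trans inl. Proof. by []. Qed.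
Lemma sum_trans_r : sim_exact d2 sum_trans inr. Proof. by []. Qed.

Lemma seq_trans_handover k s l r : d1 s (head Blank r) = None ->
  step (seq_trans k) (inl s, l, r) = step (seq_trans k) (inr (k s), l, r).
Proof. by rewrite /step /= => ->. Qed.

End Composition.

Notation "d1 >>[ k ] d2" := (seq_trans d1 d2 k)
  (at level 60, right associativity, format "d1  >>[ k ]  d2").

Section Embedding.
Variables (S1 S2 S : Type) (d1 : trans S1) (d2 : trans S2) (k : S1 -> S2).
Variables (D : trans S) (h : S1 + S2 -> S).
Hypothesis embed : sim_exact (seq_trans d1 d2 k) D h.

Lemma embed_r : sim_exact d2 D (h \o inr).
Proof. exact: sim_exact_comp (@seq_trans_r _ _ d1 d2 k) embed. Qed.

Lemma embed_steps n q l r q' l' r' : steps d1 n (q, l, r) = Some (q', l', r') ->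
  leadsto D (h (inl q), l, r) n (h (inl q'), l', r').
Proof.
move/(steps_sim (sim_comp (@seq_trans_l _ _ d1 d2 k) (sim_exactW embed))).
exact: steps_leadsto.
Qed.

Lemma embed_handover q l r : d1 q (head Blank r) = None ->
  leadsto D (h (inl q), l, r) 0 (h (inr (k q)), l, r).
Proof.
move=> halt t /=; rewrite !runE.
have E := step_sim_exact embed (inl q, l, r).
have E' := step_sim_exact embed (inr (k q), l, r).
by rewrite [map_cfg _ _]/= in E E'; rewrite E E' seq_trans_handover.
Qed.

Lemma embed_run n q l r q' l' r' :
  steps d1 n (q, l, r) = Some (q', l', r') -> d1 q' (head Blank r') = None ->
  leadsto D (h (inl q), l, r) n (h (inr (k q')), l', r').
Proof.
move=> /embed_steps run1 /(embed_handover l') hand.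
by rewrite -[n]addn0; apply: leadsto_trans run1 hand.
Qed.

End Embedding.

Lemma sim_exact_id (S : Type) (d : trans S) : sim_exact d d id.
Proof. by move=> s a; case: (d s a) => [[[? ?] ?]|]. Qed.

Section SumEmbedding.
Variables (S1 S2 S : Type) (d1 : trans S1) (d2 : trans S2) (D : trans S).
Variable h : S1 + S2 -> S.
Hypothesis embed : sim_exact (sum_trans d1 d2) D h.

Lemma embed_sum_l : sim_exact d1 D (h \o inl).
Proof. exact: sim_exact_comp (@sum_trans_l _ _ d1 d2) embed. Qed.

Lemma embed_sum_r : sim_exact d2 D (h \o inr).
Proof. exact: sim_exact_comp (@sum_trans_r _ _ d1 d2) embed. Qed.
End SumEmbedding.

(** * Trailing blanks are irrelevant *)

Definition blanks (s : seq Sym) := all is_blank s.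
Definition nonblank s := ~~ is_blank s.

Definition trim_cons (a : Sym) (t : seq Sym) := if is_blank a && nilp t then [::] else a :: t.
Fixpoint trim (s : seq Sym) : seq Sym := if s is a :: s' then trim_cons a (trim s') else [::].

Lemma head_trim s : head Blank (trim s) = head Blank s.
Proof. by case: s => [|[] s] //=; rewrite /trim_cons /=; case: (nilp _). Qed.

Lemma trim_behead s : trim (behead s) = behead (trim s).
Proof. by case: s => [|a s] //=; rewrite /trim_cons; case: ifP => //= /andP [_ /nilP ->]. Qed.

Lemma trim_cat_blanks s b : blanks b -> trim (s ++ b) = trim s.
Proof.
move=> hb; elim: s => [|a s IH] /=; last by rewrite IH.
by elim: b hb => [|x b IH] //= /andP [hx /IH ->]; rewrite /trim_cons hx.
Qed.

Lemma take_find_blank_trim r :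
  take (find is_blank r) r = take (find is_blank (trim r)) (trim r).
Proof.
elim: r => [|a r IH] //=; rewrite /trim_cons.
by case: a => //=; [case: (nilp _) | rewrite IH ..].
Qed.

Definition cfg_equiv (S : Type) (c c' : cfg S) :=
  [/\ c.1.1 = c'.1.1, trim c.1.2 = trim c'.1.2 & trim c.2 = trim c'.2].

Lemma step_equiv (S : Type) (d : trans S) (c c' : cfg S) : cfg_equiv c c' ->
  match step d c, step d c' with
  | Some x, Some y => cfg_equiv x y | None, None => True | _, _ => False end.
Proof.
case: c c' => [[q l] r] [[q' l'] r'] [/= <- hl hr].
rewrite /step -(head_trim r) hr head_trim.
case: (d q _) => [[[q1 s] []]|] //; split => //=; rewrite ?trim_behead ?hl ?hr //.
by rewrite -(head_trim l) hl head_trim.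
Qed.

Lemma run_equiv (S : Type) (d : trans S) t (c c' : cfg S) :
  cfg_equiv c c' -> run d t c = run d t c'.
Proof.
have out_equiv (x y : cfg S) : cfg_equiv x y -> output x = output y.
  case: x y => [[? ?] ?] [[? ?] ?] [_ _ hr] /=.
  by rewrite take_find_blank_trim hr -take_find_blank_trim.
elim: t c c' => [|t IH] c c' h; rewrite runE [run d _ c']runE;
have := step_equiv d h; case: (step d c) => [x|]; case: (step d c') => [y|] //.
- by rewrite (out_equiv _ _ h).
- by move=> /IH ->.
- by rewrite (out_equiv _ _ h).
Qed.

Lemma run_blanks (S : Type) (d : trans S) t q l r b : blanks l -> blanks b ->
  run d t (q, l, r ++ b) = run d t (q, [::], r).
Proof.
move=> hl hb; apply: run_equiv; split => //=; last exact: trim_cat_blanks.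
by rewrite -[l]cat0s trim_cat_blanks.
Qed.

Lemma head_blanks l : blanks l -> head Blank l = Blank.
Proof. by case: l => [|[] l]. Qed.

Lemma behead_blanks l : blanks l -> blanks (behead l).
Proof. by case: l => [|a l] //= /andP []. Qed.

Section FiniteMachine.
Variables (S : finType) (s0 : S) (d : trans S).

Let card_pred := #|S|.-1.
Let cardE : #|S| = card_pred.+1.
Proof. by rewrite prednK //; apply/card_gt0P; exists s0. Qed.

Let code (s : S) : 'I_card_pred.+1 := cast_ord cardE (enum_rank s).
Let decode (i : 'I_card_pred.+1) : S := enum_val (cast_ord (esym cardE) i).
Let codeK : cancel code decode.
Proof. by move=> s; rewrite /code /decode cast_ordK enum_rankK. Qed.

Definition TM_of : TM :=
  {| tm_k := card_pred; tm_start := code s0;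
     tm_delta := fun i a => omap (map_action code) (d (decode i) a) |}.

Lemma tm_run_TM_of t w : tm_run TM_of t w = run d t (s0, [::], w).
Proof.
rewrite /tm_run tm_run_cfgE -[(tm_start _, _, _)]/(map_cfg code (s0, [::], w)).
by apply: run_sim_exact => s a /=; rewrite codeK.
Qed.

End FiniteMachine.

(** * Sweeps and transducer passes *)

Lemma sweep_left (S : Type) (d : trans S) q :
  (forall s, nonblank s -> d q s = Some (q, s, MLeft)) ->
  forall U l R, all nonblank U ->
  steps d (size U) (q, behead (U ++ l), head Blank (U ++ l) :: R) =
  Some (q, behead l, head Blank l :: rev U ++ R).
Proof.
move=> H; elim=> [|a U IH] l R //= /andP [ha hU].
by rewrite /step /= H //= IH // rev_cons cat_rcons.
Qed.

Lemma sweep_right (S : Type) (d : trans S) q (P : pred Sym) :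
  (forall s, P s -> d q s = Some (q, s, MRight)) ->
  forall U L R, all P U ->
  steps d (size U) (q, L, U ++ R) = Some (q, rev U ++ L, R).
Proof.
move=> H; elim=> [|a U IH] L R //= /andP [ha hU].
by rewrite /step /= H //= IH // rev_cons cat_rcons.
Qed.

Definition stopper s := if s is Blank then true else if s is Dollar then true else false.
Definition nonstopper s := ~~ stopper s.

Lemma nonstopper_nonblank s : all nonstopper s -> all nonblank s.
Proof. by apply: sub_all => -[]. Qed.

(* A pass scans the tape in direction [dir] up to a stopper, driven by the
   transducer [g m s = (m', out, consumed)].  To emit [y], the machine marks the
   scanned cell [x] with a blank, walks left to the first blank after the
   tape contents, writes [y] there, walks back to the mark and restores [x];
   output thus accumulates at the far left of the tape. *)
Section Pass.
Variables (Mode : finType) (dir : bool) (g : Mode -> Sym -> Mode * option Sym * bool).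

Definition pass_state : finType :=
  ((Mode + (Mode * Sym * Sym * bool)) + (Mode * Sym * bool))%type.
Definition reading (m : Mode) : pass_state := inl (inl m).
Definition forward := if dir then MRight else MLeft.

Definition pass_trans : trans pass_state := fun q s =>
  match q with
  | inl (inl m) =>
    if stopper s then None else
    match g m s with
    | (m', None, _) => Some (reading m', s, forward)
    | (m', Some y, c) => Some (inl (inr (m', y, s, c)), Blank, MLeft)
    end
  | inl (inr (m', y, x, c)) =>
    if is_blank s then Some (inr (m', x, c), y, MRight) else Some (q, s, MLeft)
  | inr (m', x, c) =>
    if is_blank s then Some (reading m', x, if c then forward else MStay)
    else Some (q, s, MRight)
  end.

Inductive transduces : Mode -> seq Sym -> Mode -> seq Sym -> Prop :=
| transduces_nil m : transduces m [::] m [::]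
| transduces_skip m x m1 c X m' E :
    g m x = (m1, None, c) -> transduces m1 X m' E -> transduces m (x :: X) m' E
| transduces_emit m x m1 y X m' E :
    g m x = (m1, Some y, true) -> transduces m1 X m' E ->
    transduces m (x :: X) m' (y :: E)
| transduces_emit_stay m x m1 y X m' E :
    g m x = (m1, Some y, false) -> transduces m1 (x :: X) m' E ->
    transduces m (x :: X) m' (y :: E).

Lemma transduces_cat m X1 m1 E1 X2 m2 E2 :
  transduces m X1 m1 E1 -> transduces m1 X2 m2 E2 ->
  transduces m (X1 ++ X2) m2 (E1 ++ E2).
Proof.
move=> h1 h2; elim: h1 h2 => //= {X1 m1 E1} {}m x m1 => [c|y|y] X m' E hg _ IH /IH.
- exact: transduces_skip hg.
- exact: transduces_emit hg.
- exact: transduces_emit_stay hg.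
Qed.

Hypothesis g_nonblank : forall m x m1 y c, g m x = (m1, Some y, c) -> nonblank y.

Lemma pass_emit_steps m1 y x c U l R : nonblank y -> all nonblank U -> blanks l ->
  steps pass_trans (size U + 1 + size U)
    (inl (inr (m1, y, x, c)), behead (U ++ l), head Blank (U ++ l) :: Blank :: R) =
  Some (inr (m1, x, c), U ++ y :: behead l, Blank :: R).
Proof.
move=> hy hU hl; rewrite -addnA; apply: steps_add.
  by apply: sweep_left => // s /negbTE /= ->.
rewrite head_blanks //; apply: (@steps_add _ _ 1); first by rewrite /= /step /=.
have := @sweep_right _ pass_trans (inr (m1, x, c)) nonblank _ (rev U) (y :: behead l) (Blank :: R).
by rewrite revK size_rev; apply; [move=> s /negbTE /= -> | rewrite all_rev].
Qed.

Definition pass_cost (X E Lft : seq Sym) :=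
  (size X + size E) * (2 * (size Lft + size X + size E) + 3).

Lemma pass_right m X m' E Lft l rb : dir -> transduces m X m' E ->
  all nonblank Lft -> blanks l -> all nonstopper X ->
  exists k l', [/\ blanks l', k <= pass_cost X E Lft &
    steps pass_trans k (reading m, Lft ++ l, X ++ rb) =
    Some (reading m', rev X ++ Lft ++ E ++ l', rb)].
Proof.
rewrite /pass_cost => hd h; elim: h Lft l => {m X m' E} [m|m x m1|m x m1|m x m1];
  first by move=> Lft l _ hl _; exists 0, l.
- move=> c X m' E hg _ IH Lft l hL hl /= /andP [hx hX].
  have [|k [l' [hl' hk hs]]] := IH (x :: Lft) l _ hl hX.
    by rewrite /= hL andbT; case: x hx {hg}.
  exists (1 + k), l'; split => //; first by move: hk => /=; nia.
  apply: steps_add; last by move: hs; rewrite rev_cons cat_rcons; apply.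
  by rewrite /= /step /= (negbTE hx) hg /forward hd.
- move=> y X m' E hg _ IH Lft l hL hl /= /andP [hx hX].
  have [|k [l' [hl' hk hs]]] := IH (x :: (Lft ++ [:: y])) (behead l) _ (behead_blanks hl) hX.
    by rewrite /= all_cat hL /= (g_nonblank hg) andbT; case: x hx {hg}.
  exists ((1 + (size Lft + 1 + size Lft)) + 1 + k), l'; split => //.
    by move: hk => /=; rewrite size_cat /=; nia.
  apply: steps_add; last by move: hs; rewrite rev_cons cat_rcons /= -!catA /=; apply.
  apply: steps_add; first apply: steps_add.
  + by rewrite /= /step /= (negbTE hx) hg.
  + exact: pass_emit_steps (g_nonblank hg) hL hl.
  + by rewrite /= /step /= /forward hd.
- move=> y X m' E hg _ IH Lft l hL hl /= /andP [hx hX].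
  have hxX : all nonstopper (x :: X) by rewrite /= hx.
  have [|k [l' [hl' hk hs]]] := IH (Lft ++ [:: y]) (behead l) _ (behead_blanks hl) hxX.
    by rewrite all_cat hL /= (g_nonblank hg).
  exists ((1 + (size Lft + 1 + size Lft)) + 1 + k), l'; split => //.
    by move: hk => /=; rewrite size_cat /=; nia.
  apply: steps_add; last by move: hs; rewrite -!catA /=; apply.
  apply: steps_add; first apply: steps_add.
  + by rewrite /= /step /= (negbTE hx) hg.
  + exact: pass_emit_steps (g_nonblank hg) hL hl.
  + by rewrite /= /step /=.
Qed.

Lemma pass_left m X m' E Lft l R : ~~ dir -> transduces m X m' E ->
  all nonblank Lft -> blanks l -> all nonstopper X ->
  exists k l', [/\ blanks l', k <= pass_cost X E Lft &
    steps pass_trans k (reading m, behead (X ++ Lft ++ l), head Blank (X ++ Lft ++ l) :: R) =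
    Some (reading m', behead (Lft ++ E ++ l'), head Blank (Lft ++ E ++ l') :: rev X ++ R)].
Proof.
rewrite /pass_cost => /negbTE hd h; elim: h Lft l R => {m X m' E} [m|m x m1|m x m1|m x m1];
  first by move=> Lft l R _ hl _; exists 0, l.
- move=> c X m' E hg _ IH Lft l R hL hl /= /andP [hx hX].
  have [k [l' [hl' hk hs]]] := IH Lft l (x :: R) hL hl hX.
  exists (1 + k), l'; split => //; first by move: hk => /=; nia.
  apply: steps_add; last by move: hs; rewrite rev_cons cat_rcons; apply.
  by rewrite /= /step /= (negbTE hx) hg /forward hd.
- move=> y X m' E hg _ IH Lft l R hL hl /= /andP [hx hX].
  have [|k [l' [hl' hk hs]]] := IH (Lft ++ [:: y]) (behead l) (x :: R) _ (behead_blanks hl) hX.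
    by rewrite all_cat hL /= (g_nonblank hg).
  exists ((1 + (size (X ++ Lft) + 1 + size (X ++ Lft))) + 1 + k), l'; split => //.
    by move: hk => /=; rewrite !size_cat /=; nia.
  apply: steps_add; last by move: hs; rewrite rev_cons cat_rcons -!catA /=; apply.
  apply: steps_add; first apply: steps_add.
  + by rewrite /= /step /= (negbTE hx) hg.
  + rewrite catA; apply: pass_emit_steps (g_nonblank hg) _ hl.
    by rewrite all_cat hL (nonstopper_nonblank hX).
  + by rewrite /= /step /= /forward hd -!catA.
- move=> y X m' E hg _ IH Lft l R hL hl /= /andP [hx hX].
  have hxX : all nonstopper (x :: X) by rewrite /= hx.
  have [|k [l' [hl' hk hs]]] := IH (Lft ++ [:: y]) (behead l) R _ (behead_blanks hl) hxX.
    by rewrite all_cat hL /= (g_nonblank hg).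
  exists ((1 + (size (X ++ Lft) + 1 + size (X ++ Lft))) + 1 + k), l'; split => //.
    by move: hk => /=; rewrite !size_cat /=; nia.
  apply: steps_add; last by move: hs; rewrite -!catA /=; apply.
  apply: steps_add; first apply: steps_add.
  + by rewrite /= /step /= (negbTE hx) hg.
  + rewrite catA; apply: pass_emit_steps (g_nonblank hg) _ hl.
    by rewrite all_cat hL (nonstopper_nonblank hX).
  + by rewrite /= /step /= -!catA.
Qed.

End Pass.

Definition is_bit s := if s is Zero then true else if s is One then true else false.

Lemma enc_set_bits n (A : {set 'I_n}) : all is_bit (enc_set A).
Proof. by rewrite /enc_set all_map; apply/allP => i _ /=; case: (i \in A). Qed.

Lemma Zero_in_enc_set n (A : {set 'I_n}) : (Zero \in enc_set A) = (A != setT).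
Proof.
apply/mapP/idP => [[i _]|].
  case hi: (i \in A) => //= _; apply/negP => /eqP hA.
  by rewrite hA in_setT in hi.
rewrite eqEsubset subsetT /= => /subsetPn [i _ hi].
by exists i; rewrite ?mem_enum // (negbTE hi).
Qed.

Definition enc_rows n (L : seq {set 'I_n}) := flatten [seq enc_set A ++ [:: Hash] | A <- L].
Definition enc_blocks n (L : seq {set 'I_n}) := flatten [seq Hash :: enc_set A | A <- L].

Lemma enc_blocksE n (L : seq {set 'I_n}) :
  enc_inst L = nseq n One ++ enc_blocks L ++ [:: Hash].
Proof. by congr (_ ++ _); elim: L => [|A L IH] //=; rewrite -!catA /= IH. Qed.

Lemma rev_enc_inst n (L : seq {set 'I_n}) :
  rev (enc_inst L) = Hash :: rev (enc_blocks L) ++ nseq n One.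
Proof. by rewrite enc_blocksE !rev_cat rev_nseq -catA. Qed.

Lemma enc_inst_nonstopper n (L : seq {set 'I_n}) : all nonstopper (enc_inst L).
Proof.
rewrite enc_blocksE !all_cat /= all_nseq orbT /= andbT.
elim: L => [|A L IH] //=; rewrite all_cat IH andbT /=.
by apply: sub_all (enc_set_bits A) => -[].
Qed.

Lemma enc_inst_neq0 n (L : seq {set 'I_n}) : enc_inst L != [::].
Proof. by rewrite /enc_inst -size_eq0 size_cat /= addnS. Qed.

Lemma size_enc_inst n (L : seq {set 'I_n}) : size (enc_inst L) = n + 1 + size L * (n + 1).
Proof.
have size_rows : size (enc_rows L) = size L * (n + 1).
  elim: L => [|A L IH] //=.
  by rewrite size_cat IH size_cat /enc_set size_map size_enum_ord /= mulSn addn1.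
by rewrite /enc_inst size_cat size_nseq /= -/(enc_rows L) size_rows; lia.
Qed.

Lemma size_enc_inst_ge n (L : seq {set 'I_n}) :
  [/\ 0 < size (enc_inst L), n <= size (enc_inst L) & size L <= size (enc_inst L)].
Proof.
rewrite size_enc_inst; split; [lia | lia |].
by apply: leq_trans (leq_addl _ _); apply: leq_pmulr; rewrite addn1.
Qed.

(* [inl nz]: in the prefix [1^n], [nz] records [n > 0];
   [inr (nz, b, f)]: in the rows, [b] = the current row has no [Zero] so far,
   [f] = some earlier row is the full set. *)
Definition scan_mode : finType := (bool + (bool * bool * bool))%type.
Definition scan_g (m : scan_mode) (s : Sym) : scan_mode * option Sym * bool :=
  match m with
  | inl nz => match s with
              | One => (inl true, None, true)
              | Hash => (inr (nz, true, false), None, true)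
              | _ => (m, None, true) end
  | inr (nz, b, f) => match s with
              | Zero => (inr (nz, false, f), None, true)
              | Hash => (inr (nz, true, f || b), None, true)
              | _ => (m, None, true) end
  end.

Lemma scan_g_nonblank m x m1 y c : scan_g m x = (m1, Some y, c) -> nonblank y.
Proof. by case: m => [nz|[[nz b] f]]; case: x. Qed.

Lemma scan_bits nz b f s : all is_bit s ->
  transduces scan_g (inr (nz, b, f)) s (inr (nz, b && (Zero \notin s), f)) [::].
Proof.
elim: s b => [|x s IH] b /=; first by rewrite andbT; constructor.
by case: x => //= h; apply: transduces_skip => //; rewrite ?andbF; apply: IH.
Qed.

Lemma scan_ones nz n : transduces scan_g (inl nz) (nseq n One) (inl (nz || (0 < n))) [::].
Proof.
elim: n nz => [|n IH] nz /=; first by rewrite orbF; constructor.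
by apply: transduces_skip; [reflexivity | rewrite orbT; apply: IH].
Qed.

Lemma scan_rows n nz f (L : seq {set 'I_n}) :
  transduces scan_g (inr (nz, true, f)) (enc_rows L) (inr (nz, true, f || (setT \in L))) [::].
Proof.
elim: L f => [|A L IH] f; first by rewrite /= orbF; constructor.
rewrite /enc_rows /= -catA -[[::]]/([::] ++ [::]).
apply: transduces_cat (scan_bits _ _ _ (enc_set_bits A)) _.
rewrite /= Zero_in_enc_set negbK in_cons orbA eq_sym.
by apply: transduces_skip (IH _).
Qed.

Lemma scan_enc_inst n (L : seq {set 'I_n}) :
  transduces scan_g (inl false) (enc_inst L) (inr (0 < n, true, setT \in L)) [::].
Proof.
rewrite /enc_inst -[[::]]/([::] ++ [::]); apply: transduces_cat; first exact: scan_ones.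
by apply: transduces_skip; [reflexivity | exact: scan_rows].
Qed.

(* The
   reduction writes [$ 1 0^m] (the selection of the appended full set), then
   [$ # 1^n] (the appended full set), then a reversed copy of the input, so
   that the tape finally reads [enc_reopt (add_full L) (select_full L) L]. *)
Definition pass_mode : finType := option (option bool).

Definition sol_g (m : pass_mode) (s : Sym) : pass_mode * option Sym * bool :=
  match m with
  | None => (Some None, Some Dollar, false)
  | Some None => (Some (Some false), Some One, false)
  | Some (Some false) => (Some (Some true), None, true)
  | Some (Some true) => if s is Hash then (m, Some Zero, true) else (m, None, true)
  end.

Lemma sol_g_nonblank m x m1 y c : sol_g m x = (m1, Some y, c) -> nonblank y.
Proof. by case: m => [[[]|]|] /=; case: x => // -[_ <-]. Qed.

Lemma sol_bits s : all is_bit s -> transduces sol_g (Some (Some true)) s (Some (Some true)) [::].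
Proof.
elim: s => [|x s IH] /=; first constructor.
by case: x => //= h; apply: transduces_skip (IH h).
Qed.

Lemma sol_rev_blocks n (L : seq {set 'I_n}) :
  transduces sol_g (Some (Some true)) (rev (enc_blocks L)) (Some (Some true))
    (nseq (size L) Zero).
Proof.
elim: L => [|A L IH]; first constructor.
rewrite -[enc_blocks _]/(Hash :: enc_set A ++ enc_blocks L) -cat1s catA rev_cat.
rewrite [size _]/= -addn1 nseqD.
apply: transduces_cat IH _.
rewrite rev_cat -[nseq 1 Zero]/([::] ++ [:: Zero]); apply: transduces_cat.
  by apply: sol_bits; rewrite all_rev enc_set_bits.
by apply: transduces_emit (transduces_nil _ _).
Qed.

Lemma sol_rev_enc_inst n (L : seq {set 'I_n}) :
  transduces sol_g None (rev (enc_inst L)) (Some (Some true))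
    ([:: Dollar; One] ++ nseq (size L) Zero).
Proof.
rewrite rev_enc_inst.
do 2 (apply: transduces_emit_stay; first reflexivity).
apply: transduces_skip; first reflexivity.
rewrite -[nseq (size L) Zero]cats0; apply: transduces_cat (sol_rev_blocks L) _.
by apply: sol_bits; rewrite all_nseq orbT.
Qed.

Definition full_g (m : pass_mode) (s : Sym) : pass_mode * option Sym * bool :=
  match m with
  | None => (Some None, Some Dollar, false)
  | Some None => (Some (Some false), Some Hash, false)
  | Some (Some false) => match s with
                         | One => (m, Some One, true)
                         | Hash => (Some (Some true), None, true)
                         | _ => (m, None, true) end
  | Some (Some true) => (m, None, true)
  end.

Lemma full_g_nonblank m x m1 y c : full_g m x = (m1, Some y, c) -> nonblank y.
Proof. by case: m => [[[]|]|] /=; case: x => // -[_ <-]. Qed.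

Lemma full_enc_inst n (L : seq {set 'I_n}) :
  transduces full_g None (enc_inst L) (Some (Some true)) ([:: Dollar; Hash] ++ nseq n One).
Proof.
have ones k : transduces full_g (Some (Some false)) (nseq k One) (Some (Some false)) (nseq k One).
  by elim: k => [|k IH] /=; [constructor | apply: transduces_emit IH].
have rest Y : transduces full_g (Some (Some true)) Y (Some (Some true)) [::].
  by elim: Y => [|y Y IH]; [constructor | apply: transduces_skip IH].
have [x [X eX]] : exists x X, enc_inst L = x :: X.
  by case: (enc_inst L) (enc_inst_neq0 L) => // x X _; exists x, X.
rewrite eX /=; do 2 (apply: transduces_emit_stay; first reflexivity).
rewrite -eX /enc_inst -[X in transduces _ _ _ _ X]cats0.
by apply: transduces_cat (ones n) _; apply: transduces_skip (rest _).
Qed.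

Definition copy_g (m : unit) (s : Sym) : unit * option Sym * bool :=
  (tt, Some (if is_blank s then Zero else s), true).

Lemma copy_g_nonblank m x m1 y c : copy_g m x = (m1, Some y, c) -> nonblank y.
Proof. by case: x => -[_ <-]. Qed.

Lemma copy_nonblank s : all nonblank s -> transduces copy_g tt s tt s.
Proof.
elim: s => [|x s IH] /=; first constructor.
by case/andP => hx hs; apply: transduces_emit (IH hs); rewrite /copy_g (negbTE hx).
Qed.

(* Without reduction, [direct_g nz] writes the solution made of the rows equal
   to the full set, or the empty solution when [~~ nz], i.e. when [n = 0]. *)
Definition direct_g (nz : bool) (m : pass_mode) (s : Sym) : pass_mode * option Sym * bool :=
  match m with
  | None => (Some None, Some Dollar, false)
  | Some None => (Some (Some true), None, true)
  | Some (Some b) => match s with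
                     | Zero => (Some (Some false), None, true)
                     | Hash => (Some (Some true), Some (enc_bit (nz && b)), true)
                     | _ => (m, None, true) end
  end.

Lemma direct_g_nonblank nz m x m1 y c : direct_g nz m x = (m1, Some y, c) -> nonblank y.
Proof. by case: m => [[b|]|] /=; case: x => // -[_ <-] //; case: (nz && b). Qed.

Lemma direct_bits nz b s : all is_bit s ->
  transduces (direct_g nz) (Some (Some b)) s (Some (Some (b && (Zero \notin s)))) [::].
Proof.
elim: s b => [|x s IH] b /=; first by rewrite andbT; constructor.
by case: x => //= h; apply: transduces_skip => //; rewrite ?andbF; apply: IH.
Qed.

Definition full_bits nz n (L : seq {set 'I_n}) := [seq enc_bit (nz && (A == setT)) | A <- L].

Lemma full_bits_nonblank nz n (L : seq {set 'I_n}) : all nonblank (full_bits nz L).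
Proof. by rewrite /full_bits all_map; apply/allP => A _ /=; case: (nz && _). Qed.

Lemma direct_rev_blocks nz n (L : seq {set 'I_n}) :
  transduces (direct_g nz) (Some (Some true)) (rev (enc_blocks L)) (Some (Some true))
    (rev (full_bits nz L)).
Proof.
elim: L => [|A L IH]; first constructor.
rewrite -[enc_blocks _]/(Hash :: enc_set A ++ enc_blocks L) -cat1s catA rev_cat.
rewrite [full_bits _ _]/= rev_cons -cats1.
apply: transduces_cat IH _.
rewrite rev_cat -[[:: enc_bit _]]/([::] ++ [:: enc_bit (nz && (A == setT))]).
apply: transduces_cat; first by apply: direct_bits; rewrite all_rev enc_set_bits.
rewrite mem_rev Zero_in_enc_set negbK.
by apply: transduces_emit (transduces_nil _ _).
Qed.

Lemma direct_rev_enc_inst nz n (L : seq {set 'I_n}) :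
  transduces (direct_g nz) None (rev (enc_inst L)) (Some (Some true))
    (Dollar :: rev (full_bits nz L)).
Proof.
rewrite rev_enc_inst; apply: transduces_emit_stay; first reflexivity.
apply: transduces_skip; first reflexivity.
rewrite -[rev (full_bits _ _)]cats0; apply: transduces_cat (direct_rev_blocks _ _) _.
by elim: (n) => [|k IH]; [constructor | apply: transduces_skip IH].
Qed.

(** * The reduction machine *)

Definition one_step (f : Sym -> Sym) (mv : Move) : trans bool :=
  fun q s => if q then None else Some (true, f s, mv).

Lemma embed_one_step (S2 S : Type) (d2 : trans S2) (k : bool -> S2) (D : trans S)
    (h : bool + S2 -> S) f mv l r l' r' :
  sim_exact (one_step f mv >>[k] d2) D h ->
  step (one_step f mv) (false, l, r) = Some (true, l', r') ->
  leadsto D (h (inl false), l, r) 1 (h (inr (k true)), l', r').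
Proof.
by move=> embed st; apply: (embed_run embed) => //; rewrite steps1.
Qed.

Definition home_trans : trans bool := fun q s =>
  if q then None else
  if is_blank s then Some (true, Blank, MRight) else Some (false, s, MLeft).

Lemma home_steps U l R : all nonblank U -> blanks l ->
  steps home_trans (size U + 1) (false, behead (U ++ l), head Blank (U ++ l) :: R) =
  Some (true, Blank :: behead l, rev U ++ R).
Proof.
move=> hU hl; apply: steps_add; first by apply: sweep_left => // s /negbTE /= ->.
by rewrite head_blanks.
Qed.

Definition move_left := one_step id MLeft.
Definition move_right := one_step id MRight.
Definition erase_left := one_step (fun=> Blank) MLeft.

Definition scan_pass := pass_trans true scan_g.
Definition sol_pass := pass_trans false sol_g.
Definition full_pass := pass_trans true full_g.
Definition copy_pass := pass_trans false copy_g.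
Definition direct_pass nz := pass_trans false (direct_g nz).

Definition state_of (S : Type) (d : trans S) := S.

Section ReductionMachine.
Variable M : TM.

Definition reduce_trans :=
  move_left >>[fun=> inl (reading None)]
  sol_pass >>[fun=> inl false]
  move_right >>[fun=> inl (reading None)]
  full_pass >>[fun=> inl false]
  move_left >>[fun=> inl (reading tt)]
  copy_pass >>[fun=> inl false]
  home_trans >>[fun=> tm_start M]
  @tm_delta M.

Definition direct_trans nz :=
  move_left >>[fun=> inl (reading None)]
  direct_pass nz >>[fun=> inl false]
  erase_left >>[fun=> false]
  home_trans.

Definition branch_trans :=
  sum_trans (sum_trans (direct_trans false) (direct_trans true)) reduce_trans.

Definition branch (q : pass_state scan_mode) : state_of branch_trans :=
  if q is inl (inl (inr (nz, _, f))) then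
    if nz && ~~ f then inr (inl false) else inl (if nz then inr (inl false) else inl (inl false))
  else inl (inl (inl false)).

Definition machine_trans := scan_pass >>[branch] branch_trans.
Definition machine_start : state_of machine_trans := inl (reading (inl false)).
Definition reduction_TM := TM_of machine_start machine_trans.

Lemma scan_phase n (L : seq {set 'I_n}) (X := enc_inst L) :
  exists k l, [/\ blanks l, k <= pass_cost X [::] [::] &
    leadsto machine_trans (machine_start, [::], X) k
      (inr (branch (reading (inr (0 < n, true, setT \in L)))), rev X ++ l, [::])].
Proof.
have [k [l [hl hk hs]]] := pass_right (Lft := [::]) (l := [::])
  scan_g_nonblank [::] isT (scan_enc_inst L) isT isT (enc_inst_nonstopper L).
rewrite !cats0 /= in hs.
by exists k, l; split => //; apply: (embed_run (sim_exact_id _) hs).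
Qed.

End ReductionMachine.

Arguments machine_trans : clear implicits.
Arguments machine_start : clear implicits.

Definition add_full n (L : seq {set 'I_n}) := rcons L setT.

Lemma size_add_full n (L : seq {set 'I_n}) : size L < size (add_full L).
Proof. by rewrite size_rcons. Qed.

Definition select_full n (L : seq {set 'I_n}) : {set 'I_(size (add_full L))} :=
  [set Ordinal (size_add_full L)].

Lemma enc_solE m (J : {set 'I_m}) (F : nat -> bool) :
  (forall i : 'I_m, (i \in J) = F i) -> enc_sol J = [seq enc_bit (F j) | j <- iota 0 m].
Proof.
by move=> JF; rewrite /enc_sol -val_enum_ord -map_comp; apply: eq_map => i /=; rewrite JF.
Qed.

Lemma enc_sol_select_full n (L : seq {set 'I_n}) :
  enc_sol (select_full L) = nseq (size L) Zero ++ [:: One].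
Proof.
rewrite (@enc_solE _ _ (fun j => j == size L)); last by move=> i; rewrite in_set1.
rewrite size_rcons -addn1 iotaD map_cat /= add0n eqxx; congr (_ ++ _).
rewrite -[X in nseq X _](size_iota 0) -(size_map (fun j => enc_bit (j == size L))).
apply/all_pred1P; rewrite all_map; apply/allP => j.
by rewrite mem_iota add0n => /andP [_ /ltn_eqF jL] /=; rewrite jL.
Qed.

Lemma enc_set_setT n : enc_set [set: 'I_n] = nseq n One.
Proof.
rewrite -[X in nseq X _](size_enum_ord n) -(size_map (fun i => enc_bit (i \in [set: 'I_n]))).
by apply/all_pred1P; rewrite all_map; apply/allP => i _ /=; rewrite in_setT.
Qed.

Lemma enc_reopt_add_full n (L : seq {set 'I_n}) :
  enc_reopt (add_full L) (select_full L) L =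
  enc_inst L ++ nseq n One ++ Hash :: Dollar :: nseq (size L) Zero ++ One :: Dollar :: enc_inst L.
Proof.
rewrite /enc_reopt enc_sol_select_full /enc_inst /add_full map_rcons flatten_rcons.
by rewrite enc_set_setT -!catA /= -!catA.
Qed.

Lemma pass_cost_le_sq X E Lft c s : size Lft + size X + size E < c * s ->
  pass_cost X E Lft <= 3 * c ^ 2 * s ^ 2.
Proof.
rewrite /pass_cost -mulnA -expnMn => lt_cs.
apply: (@leq_trans ((c * s) * (3 * (c * s)))); first by apply: leq_mul; lia.
by rewrite mulnCA mulnn.
Qed.

Lemma reduce_cost_le (X : seq Sym) m n kA kB kC :
  0 < size X -> n <= size X -> m <= size X ->
  kA <= pass_cost (rev X) ([:: Dollar; One] ++ nseq m Zero) [::] ->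
  kB <= pass_cost X ([:: Dollar; Hash] ++ nseq n One) (Dollar :: One :: nseq m Zero) ->
  kC <= pass_cost (rev X) (rev X)
          (Dollar :: One :: nseq m Zero ++ [:: Dollar; Hash] ++ nseq n One) ->
  1 + (kA + (1 + (kB + (1 + (kC + (m.+2 + n.+2 + size X + 1)))))) <= 800 * size X ^ 2.
Proof.
move=> X_gt0 n_le m_le kA_le kB_le kC_le.
have sq : size X <= size X ^ 2 by rewrite -{1}(expn1 (size X)); apply: leq_pexp2l.
have {}kA_le : kA <= 3 * 9 ^ 2 * size X ^ 2.
  by apply: leq_trans kA_le (pass_cost_le_sq _); rewrite /= size_rev size_nseq; lia.
have {}kB_le : kB <= 3 * 9 ^ 2 * size X ^ 2.
  by apply: leq_trans kB_le (pass_cost_le_sq _); rewrite /= !size_nseq; lia.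
have {}kC_le : kC <= 3 * 9 ^ 2 * size X ^ 2.
  by apply: leq_trans kC_le (pass_cost_le_sq _); rewrite /= size_cat /= !size_nseq size_rev; lia.
lia.
Qed.

Lemma direct_cost_le (X E : seq Sym) kA :
  0 < size X -> size E <= size X -> kA <= pass_cost (rev X) (Dollar :: E) [::] ->
  1 + (kA + (1 + (size E + 1))) <= 300 * size X ^ 2.
Proof.
move=> X_gt0 E_le kA_le.
have sq : size X <= size X ^ 2 by rewrite -{1}(expn1 (size X)); apply: leq_pexp2l.
have {}kA_le : kA <= 3 * 9 ^ 2 * size X ^ 2.
  by apply: leq_trans kA_le (pass_cost_le_sq _); rewrite /= size_rev; lia.
lia.
Qed.

Lemma take_find_blank_nonblank (b t : seq Sym) : all nonblank b ->
  take (find is_blank (b ++ Blank :: t)) (b ++ Blank :: t) = b.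
Proof. by elim: b => [|x b IH] //= /andP [hx hb]; rewrite (negbTE hx) /= IH. Qed.

Section MachineRuns.
Variable M : TM.

Lemma reduce_phase n (L : seq {set 'I_n}) l1 : blanks l1 ->
  exists2 k, k <= 800 * size (enc_inst L) ^ 2 &
  forall t, run (machine_trans M) (k + t) (inr (inr (inl false)), rev (enc_inst L) ++ l1, [::]) =
            tm_run M t (enc_reopt (add_full L) (select_full L) L).
Proof.
move=> l1_ok; rewrite /tm_run enc_reopt_add_full.
move: (enc_inst L) (size_enc_inst_ge L) (enc_inst_nonstopper L) (sol_rev_enc_inst L)
  (full_enc_inst L) => X [s_gt0 n_le m_le] X_ok sol_X full_X.
have rX_ok : all nonstopper (rev X) by rewrite all_rev.
have e_red := embed_sum_r (embed_r (sim_exact_id (machine_trans M))).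
have e_sol := embed_r e_red; have e_right := embed_r e_sol; have e_full := embed_r e_right.
have e_left := embed_r e_full; have e_copy := embed_r e_left; have e_home := embed_r e_copy.
have left1 := embed_one_step (l := rev X ++ l1) (r := [::]) e_red erefl.
have [kA [l2 [l2_ok kA_le]]] := pass_left (dir := false) (Lft := [::]) (l := l1)
  sol_g_nonblank [:: Blank] isT sol_X isT l1_ok rX_ok.
rewrite /= revK => /(embed_run e_sol) /(_ erefl) sol.
set Sol := Dollar :: One :: nseq (size L) Zero.
have right := embed_one_step (l := behead (Sol ++ l2)) (r := Dollar :: X ++ [:: Blank])
  e_right erefl.
have Sol_ok : all nonblank Sol by rewrite /= all_nseq orbT.
have [kB [l3 [l3_ok kB_le]]] := pass_right (Lft := Sol) (l := l2)
  full_g_nonblank [:: Blank] isT full_X Sol_ok l2_ok X_ok.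
move=> /(embed_run e_full) /(_ erefl) full.
set Full := [:: Dollar; Hash] ++ nseq n One in full kB_le.
have SF_ok : all nonblank (Sol ++ Full) by rewrite all_cat Sol_ok /= all_nseq orbT.
have left2 := embed_one_step (l := rev X ++ Sol ++ Full ++ l3) (r := [:: Blank]) e_left erefl.
have [kC [l4 [l4_ok kC_le]]] := pass_left (dir := false) (Lft := Sol ++ Full) (l := l3)
  copy_g_nonblank [:: Blank] isT (copy_nonblank (nonstopper_nonblank rX_ok)) SF_ok l3_ok rX_ok.
rewrite revK -!catA => /(embed_run e_copy) /(_ erefl) copy.
set U := Sol ++ Full ++ rev X.
have U_ok : all nonblank U by rewrite /U catA all_cat SF_ok all_rev nonstopper_nonblank.
have := home_steps (X ++ [:: Blank]) U_ok l4_ok.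
rewrite /U -!catA => /(embed_run e_home) /(_ erefl) home.
exists (1 + (kA + (1 + (kB + (1 + (kC + (size U + 1))))))).
  have size_U : size U = (size L).+2 + n.+2 + size X.
    by rewrite /U !size_cat size_rev /Sol /Full /= !size_nseq addnA.
  by rewrite size_U; apply: reduce_cost_le.
have tapeE : rev U ++ X =
    X ++ nseq n One ++ Hash :: Dollar :: nseq (size L) Zero ++ One :: Dollar :: X.
  by rewrite /U /Sol /Full !rev_cat revK !rev_cons !rev_nseq -!cats1 -!catA.
move=> t; rewrite (leadsto_trans left1 (leadsto_trans sol (leadsto_trans right
  (leadsto_trans full (leadsto_trans left2 (leadsto_trans copy home)))))).
rewrite /= (run_sim_exact (embed_r e_home) t (tm_start M, _, _)) catA tapeE.
by rewrite run_blanks ?tm_run_cfgE //=; apply: behead_blanks.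
Qed.

Lemma direct_phase nz n (L : seq {set 'I_n}) l1 : blanks l1 ->
  exists2 k, k <= 300 * size (enc_inst L) ^ 2 &
  forall t, run (machine_trans M) (k + t)
    (inr (inl (if nz then inr (inl false) else inl (inl false))), rev (enc_inst L) ++ l1, [::]) =
  Some (full_bits nz L).
Proof.
move=> l1_ok.
move: (enc_inst L) (size_enc_inst_ge L) (enc_inst_nonstopper L) (direct_rev_enc_inst nz L)
  => X [s_gt0 n_le m_le] X_ok direct_X.
have rX_ok : all nonstopper (rev X) by rewrite all_rev.
have e_dir : sim_exact (direct_trans nz) (machine_trans M)
    (fun q => inr (inl (if nz then inr q else inl q))).
  have e_branch := embed_r (sim_exact_id (machine_trans M)).
  case: nz {direct_X}; first exact: embed_sum_r (embed_sum_l e_branch).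
  exact: embed_sum_l (embed_sum_l e_branch).
have e_pass := embed_r e_dir; have e_erase := embed_r e_pass; have e_home := embed_r e_erase.
have left1 := embed_one_step (l := rev X ++ l1) (r := [::]) e_dir erefl.
have [kA [l2 [l2_ok kA_le]]] := pass_left (dir := false) (Lft := [::]) (l := l1)
  (@direct_g_nonblank nz) [:: Blank] isT direct_X isT l1_ok rX_ok.
rewrite /= revK => /(embed_run e_pass) /(_ erefl) pass.
set B := rev (full_bits nz L).
have erase := embed_one_step (l := B ++ l2) (r := Dollar :: X ++ [:: Blank]) e_erase erefl.
have B_ok : all nonblank B by rewrite all_rev full_bits_nonblank.
have := home_steps (Blank :: X ++ [:: Blank]) B_ok l2_ok.
rewrite revK => /(steps_sim (sim_exactW e_home)) /steps_leadsto home.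
exists (1 + (kA + (1 + (size B + 1)))); last first.
  move=> t; rewrite (leadsto_trans left1 (leadsto_trans pass (leadsto_trans erase home))).
  rewrite run_halt; first by rewrite /= take_find_blank_nonblank // full_bits_nonblank.
  exact: (step_sim_exact e_home (true, _, _)).
by apply: direct_cost_le kA_le; rewrite ?size_rev ?size_map.
Qed.

Lemma branch_reduce n (L : seq {set 'I_n}) : 0 < n -> setT \notin L ->
  branch M (reading (inr (0 < n, true, setT \in L))) = inr (inl false).
Proof. by move=> n_gt0 /negbTE LnT; rewrite /= n_gt0 LnT. Qed.

Lemma branch_direct n (L : seq {set 'I_n}) : ~~ ((0 < n) && (setT \notin L)) ->
  branch M (reading (inr (0 < n, true, setT \in L))) =
  inl (if 0 < n then inr (inl false) else inl (inl false)).
Proof. by move=> /negbTE reduce_n; rewrite /= reduce_n. Qed.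

Lemma scan_phase_le n (L : seq {set 'I_n}) : exists k l, [/\ blanks l,
  k <= 12 * size (enc_inst L) ^ 2 &
  leadsto (machine_trans M) (machine_start M, [::], enc_inst L) k
    (inr (branch M (reading (inr (0 < n, true, setT \in L)))), rev (enc_inst L) ++ l, [::])].
Proof.
have [k [l [l_ok k_le scan]]] := scan_phase M L.
exists k, l; split => //; apply: leq_trans k_le (pass_cost_le_sq (c := 2) _).
by have [X_gt0 _ _] := size_enc_inst_ge L; rewrite /=; lia.
Qed.

Lemma machine_reduces n (L : seq {set 'I_n}) : 0 < n -> setT \notin L ->
  exists2 N, N <= 1000 * size (enc_inst L) ^ 2 &
  forall t, run (machine_trans M) (N + t) (machine_start M, [::], enc_inst L) =
            tm_run M t (enc_reopt (add_full L) (select_full L) L).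
Proof.
move=> n_gt0 LnT; have [k1 [l [l_ok k1_le scan]]] := scan_phase_le L.
rewrite branch_reduce // in scan.
have [k2 k2_le reduce] := reduce_phase L l_ok.
by exists (k1 + k2) => [|t]; [lia | rewrite -addnA scan reduce].
Qed.

Lemma machine_solves_directly n (L : seq {set 'I_n}) : ~~ ((0 < n) && (setT \notin L)) ->
  exists2 N, N <= 1000 * size (enc_inst L) ^ 2 &
  forall t, run (machine_trans M) (N + t) (machine_start M, [::], enc_inst L) =
            Some (full_bits (0 < n) L).
Proof.
move=> direct; have [k1 [l [l_ok k1_le scan]]] := scan_phase_le L.
rewrite branch_direct // in scan.
have [k2 k2_le solve] := direct_phase (0 < n) L l_ok.
by exists (k1 + k2) => [|t]; [lia | rewrite -addnA scan solve].
Qed.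

End MachineRuns.

Lemma sc_opt_gt0 n (L : seq {set 'I_n}) : 0 < n -> 0 < size L -> 0 < sc_opt L.
Proof.
move=> n_gt0 L_gt0; apply: (big_ind (fun x => 0 < x)) => // [x y|J]; first by rewrite leq_min => ->.
rewrite card_gt0 /sc_covers; apply: contraTneq => ->.
by rewrite big_set0 eq_sym -subset0 subTset; apply/eqP => /setP /(_ (Ordinal n_gt0)); rewrite !inE.
Qed.

Lemma rem_rcons_notin (T : eqType) (x : T) (s : seq T) : x \notin s -> rem x (rcons s x) = s.
Proof.
elim: s => [|a s IH] /=; first by rewrite eqxx.
by rewrite in_cons negb_or eq_sym => /andP [/negbTE -> /IH ->].
Qed.

Lemma add_full_valid n (L : seq {set 'I_n}) : sc_valid L -> setT \notin L -> sc_valid (add_full L).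
Proof.
by case/andP => L_uniq _ LnT; rewrite /sc_valid rcons_uniq LnT L_uniq big_rcons /= setUT.
Qed.

Lemma setT_in_add_full n (L : seq {set 'I_n}) : setT \in add_full L.
Proof. by rewrite mem_rcons mem_head. Qed.

Lemma covers_select_full n (L : seq {set 'I_n}) : sc_covers (add_full L) (select_full L).
Proof. by rewrite /sc_covers big_set1 /= nth_rcons ltnn eqxx. Qed.

Lemma select_full_approx (R : realFieldType) (rho : R) n (L : seq {set 'I_n}) :
  (1 <= rho)%R -> 0 < n -> (#|select_full L|%:R <= rho * (sc_opt (add_full L))%:R)%R.
Proof.
move=> rho_ge1 n_gt0; rewrite cards1 -[1%:R%R]mulr1.
apply: ler_pM => //; rewrite ler1n sc_opt_gt0 //.
by rewrite size_rcons.
Qed.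

Definition full_rows b n (L : seq {set 'I_n}) : {set 'I_(size L)} :=
  [set i : 'I_(size L) | b && (nth set0 L i == setT)].

Lemma enc_sol_full_rows b n (L : seq {set 'I_n}) : enc_sol (full_rows b L) = full_bits b L.
Proof.
rewrite (@enc_solE _ _ (fun j => b && (nth set0 L j == setT))) => [|i]; last by rewrite inE.
by rewrite /full_bits -[in RHS](mkseq_nth set0 L) /mkseq -map_comp.
Qed.

Lemma covers_full_rows n (L : seq {set 'I_n}) : ~~ ((0 < n) && (setT \notin L)) ->
  sc_covers L (full_rows (0 < n) L).
Proof.
case: (posnP n) => [n0 _ | n_gt0]; first by subst n; apply/eqP/setP => -[].
rewrite /= negbK => LT; have Li : index setT L < size L by rewrite index_mem.
rewrite /sc_covers eqEsubset subsetT /=.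
apply: subset_trans (bigcup_sup (Ordinal Li) _); first by rewrite /= nth_index.
by rewrite inE /= nth_index.
Qed.

Lemma card_full_rows b n (L : seq {set 'I_n}) : uniq L -> #|full_rows b L| <= b.
Proof.
case: b => L_uniq; last by rewrite leqn0 cards_eq0; apply/eqP/setP => i; rewrite !inE.
apply/card_le1_eqP => i j; rewrite !inE /= => /eqP Li /eqP Lj.
have := nth_uniq set0 (ltn_ord i) (ltn_ord j) L_uniq.
by rewrite Li Lj eqxx => /esym /eqP /ord_inj.
Qed.

Lemma full_bits_good (f : nat -> rat) n (L : seq {set 'I_n}) : (forall n, (1 <= f n)%R) ->
  sc_valid L -> ~~ ((0 < n) && (setT \notin L)) -> sc_good_output f L (full_bits (0 < n) L).
Proof.
move=> f_ge1 /andP [L_uniq _] direct.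
exists (full_rows (0 < n) L); split; rewrite ?enc_sol_full_rows ?covers_full_rows //.
apply: (@le_trans _ _ (0 < n)%:R%R); first by rewrite ler_nat card_full_rows.
case: posnP direct => [_ _|n_gt0]; first by rewrite mulr_ge0 // (le_trans _ (f_ge1 n)).
rewrite /= negbK => LT; rewrite -[1%:R%R]mulr1; apply: ler_pM => //.
by rewrite ler1n sc_opt_gt0 //; case: (L) LT.
Qed.

Lemma size_enc_reopt_add_full_le n (L : seq {set 'I_n}) :
  size (enc_reopt (add_full L) (select_full L) L) <= 8 * size (enc_inst L).
Proof.
rewrite enc_reopt_add_full; move: (enc_inst L) (size_enc_inst_ge L) => X [X_gt0 n_le m_le].
by rewrite !size_cat /= size_cat /= !size_nseq; lia.
Qed.

Lemma time_bound s w N c d : 0 < s -> w <= 8 * s -> N <= 1000 * s ^ 2 ->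
  N + (c * w ^ d + c) <= (1000 + c * 8 ^ d) * s ^ d.+2 + (1000 + c * 8 ^ d).
Proof.
move=> s_gt0 w_le N_le.
have sd_le : s ^ d <= s ^ d.+2 by apply: leq_pexp2l => //; lia.
have s2_le : s ^ 2 <= s ^ d.+2 by apply: leq_pexp2l => //; lia.
have w_pow : c * w ^ d <= c * 8 ^ d * s ^ d.+2.
  rewrite -mulnA leq_mul2l; apply/orP; right.
  apply: leq_trans (leq_mul (leqnn _) sd_le); rewrite -expnMn.
  by case: (d) => // e; rewrite leq_exp2r.
have c_le : c <= c * 8 ^ d by rewrite leq_pmulr ?expn_gt0.
have : 1000 * s ^ 2 <= 1000 * s ^ d.+2 by rewrite leq_mul2l s2_le orbT.
move: w_pow c_le; rewrite mulnDl; set S := s ^ d.+2; set B := c * 8 ^ d; lia.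
Qed.

Local Open Scope ring_scope.

Theorem lemma3p4 (R : realFieldType) (rho : R) (f : nat -> rat) :
  1 <= rho -> (forall n, 1 <= f n) ->
  poly_approx_reopt_Sminus rho f -> poly_approx_SetCover f.
Proof.
move=> rho_ge1 f_ge1 [M [c [d reopt]]].
exists (reduction_TM M), (1000 + c * 8 ^ d)%N, d.+2 => n L L_valid /=.
rewrite tm_run_TM_of; have [X_gt0 _ _] := size_enc_inst_ge L.
case: (boolP ((0 < n) && (setT \notin L)))%N => [/andP [n_gt0 LnT] | direct].
- have [N N_le reduce] := machine_reduces M n_gt0 LnT.
  have rem_full : perm_eq L (rem setT (add_full L)) by rewrite rem_rcons_notin.
  have [o [run_o o_good]] := reopt n (add_full L) L setT (select_full L)
    (add_full_valid L_valid LnT) (setT_in_add_full L) rem_full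
    L_valid (covers_select_full L) (select_full_approx L rho_ge1 n_gt0).
  exists o; split => //.
  have := time_bound c d X_gt0 (size_enc_reopt_add_full_le L) N_le.
  by move/subnKC <-; rewrite -addnA reduce (tm_run_monotone _ run_o).
- have [N N_le solve] := machine_solves_directly M direct.
  exists (full_bits (0 < n)%N L); split; last exact: full_bits_good.
  have := leq_trans (leq_addr _ _) (time_bound c d X_gt0 (leq0n _) N_le).
  by move/subnKC <-; rewrite solve.
Qed.
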